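(* Let $F$ be a global function field with full constant field $\mathbb{F}_q$, with $n\ge1$ rational places $P_1,\dots,P_n$ and class number $h$; fix an integer $m\ge1$. Let $r\ge s\ge0$ be integers and let $x_1,\dots,x_m\ge0$ be real numbers with $x_1+\cdots+x_m\le1$ such that $|\mathcal{V}_m(r,s;\lfloor x_1n\rfloor,\dots,\lfloor x_mn\rfloor)|<h$. Let $G$ be a divisor of $F$ of degree $r$ with ${\rm supp}(G)\cap\{P_1,\dots,P_n\}=\emptyset$ such that for every $f\in\mathcal{L}(G)\setminus\{0\}$, if $E=(f)_0$ satisfies $j_\ell(E)\le2\lfloor x_\ell n\rfloor+\sum_{\nu=\ell+1}^m\lfloor x_\nu n\rfloor$ for $1\le\ell\le m$ and $J_m(E)\le2\sum_{\ell=1}^m(\ell+1)\lfloor x_\ell n\rfloor$, then $\deg(\overline E)\le s-1$. Assume that $|\mathcal{L}(G)|\cdot|M(x_1,\dots,x_m;\mathbf{0})|>q^{mn}$ and that $(m+1)n\ge s+2\sum_{l=1}^m(l+1)\lfloor x_ln\rfloor$. Let $\mathbf{c}\in\mathbb{F}_q^{mn}$ be such that $N_{\mathbf c}=\{f\in\mathcal{L}(G):\Phi(f)\in M(x_1,\dots,x_m;\mathbf c)\}$ satisfies $|N_{\mathbf c}|\ge|\mathcal{L}(G)|\cdot|M(x_1,\dots,x_m;\mathbf 0)|/q^{mn}$, and let $C=\psi(N_{\mathbf c})\subseteq\mathbb{F}_q^n$. Then $$|C|\ge\Bigl\lceil\frac{|\mathcal{L}(G)|\cdot|M(x_1,\dots,x_m;\mathbf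 0)|}{q^{mn}}\Bigr\rceil\quad\text{and}\quad d(C)\ge(m+1)n+1-s-2\sum_{l=1}^m(l+1)\lfloor x_ln\rfloor.$$
   Context: $v_P$ is the normalized valuation at a place $P$, $v_P(D)$ the coefficient of $P$ in a divisor $D$, $\mathcal{L}(G)=\{f\in F: f=0\text{ or } v_P(f)\ge-v_P(G)\ \forall P\}$, $(f)_0$ the zero divisor of $f$. For a positive divisor $D$: $\overline D=\sum_{i=1}^n\min(m+1,v_{P_i}(D))P_i$; $j_\ell(D)=|\{i: v_{P_i}(D)=m-\ell\}|$ for $0\le\ell\le m$; $J_m(D)=\sum_{\ell=1}^m(\ell+1)j_\ell(D)$. For integers $r\ge s\ge0$ and integers $X_1,\dots,X_m\ge0$, $\mathcal{V}_m(r,s;X_1,\dots,X_m)$ is the set of positive divisors $D$ of $F$ with $\deg D=r$, $\deg\overline D\ge s$, $j_\ell(D)\le2X_\ell+\sum_{\nu=\ell+1}^mX_\nu$ for $1\le\ell\le m$, and $J_m(D)\le2\sum_{\ell=1}^m(\ell+1)X_\ell$. For $\boldsymbol\alpha=(\alpha^{(1)}_1,\dots,\alpha^{(1)}_m,\dots,\alpha^{(n)}_1,\dots,\alpha^{(n)}_m)\in\mathbb{F}_q^{mn}$ and $1\le\ell\le m$, $I_\ell(\boldsymbol\alpha)=\{i\in\{1,\dots,n\}:\alpha^{(i)}_m=\cdots=\alpha^{(i)}_{\ell+1}=0,\ \alpha^{(i)}_\ell\ne0\}$. For $\mathbf c\in\mathbb{F}_q^{mn}$, $M(x_1,\dots,x_m;\mathbf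 c)=\{\boldsymbol\alpha\in\mathbb{F}_q^{mn}:|I_\ell(\boldsymbol\alpha-\mathbf c)|\le\lfloor x_\ell n\rfloor\ \text{for }1\le\ell\le m\}$. For each $i$ let $t_i$ be a local parameter at $P_i$; each $f\in\mathcal{L}(G)$ has a local expansion $f=\sum_{l\ge0}f^{(l)}(P_i)t_i^l$ with $f^{(l)}(P_i)\in\mathbb{F}_q$. $\Phi:\mathcal{L}(G)\to\mathbb{F}_q^{mn}$, $\Phi(f)=(\phi_1(f),\dots,\phi_n(f))$ with $\phi_i(f)=(f^{(m-1)}(P_i),\dots,f^{(1)}(P_i),f^{(0)}(P_i))$; $\psi:\mathcal{L}(G)\to\mathbb{F}_q^n$, $\psi(f)=(f^{(m)}(P_1),\dots,f^{(m)}(P_n))$. $d(C)$ is the minimum Hamming distance of $C$. *)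

From HB Require Import structures.
From mathcomp Require Import all_boot all_order all_algebra.
From mathcomp Require Import boolp reals.
From mathcomp Require Import finmap.

Set Implicit Arguments.
Unset Strict Implicit.
Unset Printing Implicit Defensive.

Import Order.TTheory GRing.Theory Num.Theory.
Local Open Scope ring_scope.

(* A classical "the natural number k with P k" (0 if none exists). *)
Definition the_nat (Pn : nat -> Prop) : nat :=
  match pselect (exists k, Pn k) with
  | left e => proj1_sig (cid e)
  | right _ => 0%N
  end.

Definition has_card (T : eqType) (A : T -> Prop) (k : nat) : Prop :=
  exists s : seq T, [/\ uniq s, (forall x, x \in s <-> A x) & size s = k].
Definition fincard (T : eqType) (A : T -> Prop) : nat := the_nat (has_card A).

Section FunctionField.
(* F is a field containing the finite field K = F_q through the embedding iota. *)
Variables (K : finFieldType) (F : fieldType) (iota : {rmorphism K -> F}).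

Definition Kpoly_eval (p : {poly K}) (x : F) : F := (map_poly iota p).[x].

Definition transcendental_over_K (x : F) : Prop :=
  forall p : {poly K}, p != 0 -> Kpoly_eval p x != 0.
Definition algebraic_over_K (y : F) : Prop :=
  exists2 p : {poly K}, p != 0 & Kpoly_eval p y = 0.

Definition in_Kx (x y : F) : Prop :=
  exists p q : {poly K}, Kpoly_eval q x != 0 /\ y = Kpoly_eval p x / Kpoly_eval q x.

(* F/K is an algebraic function field in one variable:
   F is a finite extension of K(x) for some x transcendental over K. *)
Definition function_field : Prop :=
  exists x : F, transcendental_over_K x /\
    exists s : seq F, forall y : F, exists c : seq F,
      [/\ size c = size s, (forall i, (i < size s)%N -> in_Kx x c`_i)
        & y = \sum_(i < size s) c`_i * s`_i].

Definition full_constant_field : Prop :=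
  forall y : F, algebraic_over_K y -> exists a : K, y = iota a.

(* Places of F/K are represented by their normalized discrete valuations
   (with the convention v 0 = 0; the value at 0 plays no role). *)
Record is_place (v : F -> int) : Prop := IsPlace {
  place_v0 : v 0 = 0;
  place_mul : forall x y, x != 0 -> y != 0 -> v (x * y) = v x + v y;
  place_add : forall x y, x != 0 -> y != 0 -> x + y != 0 ->
                Num.min (v x) (v y) <= v (x + y);
  place_const : forall a : K, a != 0 -> v (iota a) = 0;
  place_unif : exists t : F, v t = 1 }.

Definition place := {v : F -> int | is_place v}.
HB.instance Definition _ := gen_eqMixin place.
HB.instance Definition _ := gen_choiceMixin place.

Definition vP (P : place) : F -> int := proj1_sig P.

(* deg P = d : the residue field O_P / P has a K-basis of size d. *)
Definition place_deg_is (P : place) (d : nat) : Prop :=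
  exists b : 'I_d -> F,
  [/\ forall i, 0 <= vP P (b i),
      forall c : 'I_d -> K, (exists i, c i != 0) ->
        let z := \sum_i iota (c i) * b i in z != 0 /\ vP P z <= 0
    & forall y, 0 <= vP P y -> exists c : 'I_d -> K,
        let z := y - \sum_i iota (c i) * b i in z = 0 \/ 0 < vP P z].

Definition place_deg (P : place) : nat := the_nat (place_deg_is P).

(* Divisors: finitely supported functions places -> int; v_P(D) = D P. *)
Definition divisor := {fsfun place -> int with 0}.

Definition deg (D : divisor) : int :=
  \sum_(P <- finsupp D) D P * (place_deg P)%:Z.

Definition positive_div (D : divisor) : Prop := forall P, 0 <= D P.

Definition lin_equiv (D D' : divisor) : Prop :=
  exists f : F, f != 0 /\ forall P, D P - D' P = vP P f.

Definition class_number (h : nat) : Prop :=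
  exists Ds : 'I_h -> divisor,
  [/\ forall i, deg (Ds i) = 0,
      forall i j, i != j -> ~ lin_equiv (Ds i) (Ds j)
    & forall D, deg D = 0 -> exists i, lin_equiv D (Ds i)].

Definition LL (G : divisor) (f : F) : Prop :=
  f = 0 \/ forall P, - G P <= vP P f.

Definition zero_div (f : F) (P : place) : int := Num.max 0 (vP P f).

(* a = (a_l)_l are the coefficients of the local expansion
   f = sum_l a_l t^l at P (t a local parameter at P). *)
Definition is_local_expansion (P : place) (t f : F) (a : nat -> K) : Prop :=
  forall N : nat, let z := f - \sum_(l < N) iota (a l) * t ^+ l in
    z = 0 \/ (N%:Z <= vP P z).

Section RationalPlaces.
Variables (n m : nat) (Ps : 'I_n -> place).

Definition jl (D : place -> int) (l : nat) : nat :=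
  #|[set i : 'I_n | D (Ps i) == m%:Z - l%:Z]|.

Definition Jm (D : place -> int) : nat := (\sum_(1 <= l < m.+1) l.+1 * jl D l)%N.

(* deg(bar D) where bar D = sum_i min(m+1, v_{P_i}(D)) P_i, the P_i being
   rational (degree one) places *)
Definition degbar (D : place -> int) : int :=
  \sum_(i < n) Num.min (m.+1)%:Z (D (Ps i)).

Definition jcond (X : nat -> int) (D : place -> int) : Prop :=
  (forall l : nat, (1 <= l <= m)%N ->
     (jl D l)%:Z <= 2%:Z * X l + \sum_(l.+1 <= nu < m.+1) X nu)
  /\ (Jm D)%:Z <= 2%:Z * \sum_(1 <= l < m.+1) (l.+1)%:Z * X l.

Definition Vm (r s : nat) (X : nat -> int) (D : divisor) : Prop :=
  [/\ positive_div D, deg D = r%:Z, s%:Z <= degbar D & jcond X D].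

End RationalPlaces.
End FunctionField.

Section Codes.
Variables (K : finFieldType) (n m : nat).

(* Vectors of F_q^{mn}: alpha i j = alpha^{(i+1)}_{j+1}. *)
(* entry alpha^{(i)}_l for the 1-based index l (0 if out of range) *)
Definition ent (alpha : 'M[K]_(n, m)) (i : 'I_n) (l : nat) : K :=
  if insub (l.-1) is Some j then alpha i j else 0.

(* I_l(alpha), l 1-based *)
Definition Iset (alpha : 'M[K]_(n, m)) (l : nat) : {set 'I_n} :=
  [set i | [forall j : 'I_m, (l <= j)%N ==> (alpha i j == 0)] && (ent alpha i l != 0)].

(* M(x_1, ..., x_m; c) with X_l = floor (x_l n) *)
Definition Mset (X : nat -> int) (c : 'M[K]_(n, m)) : {set 'M[K]_(n, m)} :=
  [set alpha | [forall l : 'I_m, (#|Iset (alpha - c) l.+1|)%:Z <= X l.+1]].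

Definition hamming (u v : 'rV[K]_n) : nat := #|[set i | u 0 i != v 0 i]|.

Definition min_dist_ge (C : {set 'rV[K]_n}) (d : int) : Prop :=
  forall u v, u \in C -> v \in C -> u != v -> d <= (hamming u v)%:Z.

(* Phi(f) = (phi_1(f), ..., phi_n(f)), phi_i(f) = (f^{(m-1)}(P_i), ..., f^{(0)}(P_i)),
   i.e. alpha^{(i)}_{j} = f^{(m-j)}(P_i); coef i f l = f^{(l)}(P_i). *)
Definition Phi (F : Type) (coef : 'I_n -> F -> nat -> K) (f : F) : 'M[K]_(n, m) :=
  \matrix_(i, j) coef i f (m.-1 - j)%N.

Definition psi (F : Type) (coef : 'I_n -> F -> nat -> K) (f : F) : 'rV[K]_n :=
  \row_i coef i f m.

End Codes.

Definition Xfloor (R : realType) (n : nat) (x : nat -> R) (l : nat) : int :=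
  Num.floor (x l * n%:R).

(* For distinct f, g in N_c, h = f - g is a nonzero element of L(G) with
   v_{P_i}(h) >= 0 at every P_i.  Read row i of a matrix as a polynomial: then
   v_{P_i}(h) = m - l with 1 <= l <= m means that row i of Phi(f) - Phi(g) has
   size l.  Writing Phi(f) - Phi(g) = (Phi(f) - c) - (Phi(g) - c), the size of a
   difference of polynomials is one of the two sizes or lies below their common
   value, so the bounds |I_l| <= X_l for Phi(f) - c and Phi(g) - c give the j_l
   and J_m conditions for (h)_0, and the hypothesis on G gives
   deg(bar (h)_0) <= s - 1.  Each P_i contributes at least m + 1 to
   deg(bar (h)_0) + #{i | v_{P_i}(h) = m} + J_m((h)_0), and v_{P_i}(h) = m forces
   psi(f)_i <> psi(g)_i; this is the distance bound.  It is positive, so psi is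
   injective on N_c and |C| >= |N_c|. *)

From HB Require Import structures.
From mathcomp Require Import all_boot all_order all_algebra.
From mathcomp Require Import boolp reals.
From mathcomp Require Import finmap.
From mathcomp Require Import ring zify.
Import Order.TTheory GRing.Theory Num.Theory.
Local Open Scope ring_scope.
Set Implicit Arguments.
Unset Strict Implicit.

Section Valuation.
Variables (K : finFieldType) (F : fieldType) (iota : {rmorphism K -> F}).
Variable P : place iota.
Local Notation v := (vP P).

Let v_place : is_place iota v := proj2_sig P.

(* [v z >= N] with [v 0] read as +oo (the place only records [v 0 = 0]). *)
Definition vP_ge (N : int) (z : F) : Prop := z = 0 \/ N <= v z.

Lemma vPN x : v (- x) = v x.
Proof.
have [->|x0] := eqVneq x 0; first by rewrite oppr0.
have N1_0 : (-1 : K) != 0 by rewrite oppr_eq0 oner_eq0.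
have := place_const v_place N1_0; rewrite rmorphN1 => vN1.
by rewrite -mulN1r (place_mul v_place) ?vN1 ?add0r ?oppr_eq0 ?oner_eq0.
Qed.

Lemma vP_geN N x : vP_ge N x -> vP_ge N (- x).
Proof. by case=> [->|Nx]; [left; rewrite oppr0 | right; rewrite vPN]. Qed.

Lemma vP_geD N x y : vP_ge N x -> vP_ge N y -> vP_ge N (x + y).
Proof.
have [->|x0] := eqVneq x 0; first by rewrite add0r.
have [->|y0] := eqVneq y 0; first by rewrite addr0.
have [|xy0] := eqVneq (x + y) 0; first by left.
move=> [/eqP|Nx]; first by rewrite (negbTE x0).
move=> [/eqP|Ny]; first by rewrite (negbTE y0).
by right; apply: le_trans (place_add v_place x0 y0 xy0); rewrite le_min Nx Ny.
Qed.

Lemma vP_geB N x y : vP_ge N x -> vP_ge N y -> vP_ge N (x - y).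
Proof. by move=> Nx /vP_geN; apply: vP_geD. Qed.

Lemma vPD_strict x y : x != 0 -> vP_ge (v x + 1) y -> v (x + y) = v x.
Proof.
move=> x0 [->|vxy]; first by rewrite addr0.
have [y0|y0] := eqVneq y 0; first by rewrite y0 addr0.
have lt_xy : v x < v y by rewrite -lezD1.
have [xy0|xy0] := eqVneq (x + y) 0.
  by move: lt_xy; rewrite -[y](addKr x) xy0 addr0 vPN ltxx.
apply/eqP; rewrite eq_le; apply/andP; split; last first.
  by apply: le_trans (place_add v_place x0 y0 xy0); rewrite le_min lexx ltW.
have Ny0 : - y != 0 by rewrite oppr_eq0.
have := place_add v_place xy0 Ny0; rewrite addrK vPN => /(_ x0).
by rewrite ge_min [v y <= _]leNgt lt_xy orbF.
Qed.

Lemma vP0 : v 0 = 0.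
Proof. exact: place_v0 v_place. Qed.

Lemma vP_eq1_neq0 t : v t = 1 -> t != 0.
Proof. by apply: contra_eq_neq => ->; rewrite vP0. Qed.

Lemma vP_expr t k : v t = 1 -> v (t ^+ k) = k%:Z.
Proof.
move=> vt1; have t0 := vP_eq1_neq0 vt1.
elim: k => [|k IHk].
  by rewrite expr0 -(rmorph1 iota) (place_const v_place) ?oner_eq0.
by rewrite exprS (place_mul v_place) ?expf_neq0 // vt1 IHk -addn1 PoszD addrC.
Qed.

Lemma vP_monomial t c k : v t = 1 -> c != 0 -> v (iota c * t ^+ k) = k%:Z.
Proof.
move=> vt1 c0; have t0 := vP_eq1_neq0 vt1.
by rewrite (place_mul v_place) ?(place_const v_place) ?vP_expr ?add0r ?fmorph_eq0 ?expf_neq0.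
Qed.

Section LocalExpansion.
Variable t : F.
Hypothesis vt1 : v t = 1.

Lemma local_expansionB f g a b :
  is_local_expansion P t f a -> is_local_expansion P t g b ->
  is_local_expansion P t (f - g) (fun l => a l - b l).
Proof.
move=> fa gb N /=.
have -> : f - g - \sum_(l < N) iota (a l - b l) * t ^+ l =
    (f - \sum_(l < N) iota (a l) * t ^+ l) - (g - \sum_(l < N) iota (b l) * t ^+ l).
  under eq_bigr do rewrite rmorphB mulrBl.
  by rewrite sumrB; ring.
exact: vP_geB (fa N) (gb N).
Qed.

Lemma local_expansion_val f a k : is_local_expansion P t f a ->
  (forall l, (l < k)%N -> a l = 0) -> a k != 0 -> v f = k%:Z.
Proof.
move=> fa low ak0; have := fa k.+1; rewrite /= big_ord_recr /= big1 => [|l _]; last first.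
  by rewrite low // rmorph0 mul0r.
rewrite add0r => rest; have akt0 : iota (a k) * t ^+ k != 0.
  by rewrite mulf_neq0 ?fmorph_eq0 ?expf_neq0 ?vP_eq1_neq0.
have vakt : v (iota (a k) * t ^+ k) = k%:Z := vP_monomial k vt1 ak0.
by rewrite -[f](subrKC (iota (a k) * t ^+ k)) (vPD_strict akt0) ?vakt // -PoszD addn1.
Qed.

Lemma local_expansion_val_ge f a N : is_local_expansion P t f a -> f != 0 ->
  (forall l, (l < N)%N -> a l = 0) -> N%:Z <= v f.
Proof.
move=> fa f0 low; have := fa N; rewrite /= big1 => [|l _]; last first.
  by rewrite low // rmorph0 mul0r.
by rewrite subr0 => -[/eqP|]; first by rewrite (negbTE f0).
Qed.

Lemma local_expansion_lead f a k : is_local_expansion P t f a -> f != 0 ->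
  v f = k%:Z -> (forall l, (l < k)%N -> a l = 0) /\ a k != 0.
Proof.
move=> fa f0 vfk.
have [/existsP[j aj0]|/existsPn low] := boolP [exists j : 'I_k.+1, a j != 0].
  have [j0 aj00 min_j0] := ex_minnP (ex_intro (fun j => a j != 0) _ aj0).
  have low : forall l, (l < j0)%N -> a l = 0.
    by move=> l; apply: contraTeq => al0; rewrite -leqNgt min_j0.
  by have := local_expansion_val fa low aj00; rewrite vfk => -[->].
suff : (k.+1)%:Z <= v f by rewrite vfk lez_nat ltnn.
apply: (local_expansion_val_ge fa f0) => l lk.
by apply/eqP; apply/negPn; exact: (low (Ordinal lk)).
Qed.

End LocalExpansion.
End Valuation.

Lemma LLB (K : finFieldType) (F : fieldType) (iota : {rmorphism K -> F})
    (G : divisor iota) f g :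
  LL G f -> LL G g -> LL G (f - g).
Proof.
have LLE h : LL G h <-> forall P, vP_ge P (- G P) h.
  split=> [[->|Lh] P|Lh]; [by left | by right | ].
  have [->|h0] := eqVneq h 0; [by left | right=> P].
  by case: (Lh P) => [/eqP|]; first by rewrite (negbTE h0).
by move=> /LLE Lf /LLE Lg; apply/LLE => P; apply: vP_geB.
Qed.

Lemma size_polyB_cases (R : nzRingType) (p q : {poly R}) :
  [\/ size p = size (p - q), size q = size (p - q)
    | (size (p - q)%R < size p)%N /\ size p = size q].
Proof.
have [pq|pq|pq] := ltngtP (size p) (size q).
- by apply: Or32; rewrite addrC size_polyDl size_polyN.
- by apply: Or31; rewrite size_polyDl ?size_polyN.
have := size_polyD p (- q); rewrite size_polyN -pq maxnn leq_eqVlt.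
by case/orP=> [/eqP ->|]; [apply: Or31 | move=> lt; apply: Or33].
Qed.

Lemma size_rVpoly_rev (R : nzRingType) (m k : nat) (a : nat -> R) :
  (k < m)%N -> (forall l, (l < k)%N -> a l = 0) -> a k != 0 ->
  size (rVpoly (\row_(j < m) a (m.-1 - j)%N)) = (m - k)%N.
Proof.
move=> km low ak0.
have -> : rVpoly (\row_(j < m) a (m.-1 - j)%N) = \poly_(j < m - k) a (m.-1 - j)%N.
  apply/polyP=> j; rewrite coef_rVpoly coef_poly.
  case: insubP => [j' _ <-|jm]; last by case: ltnP => //; lia.
  have := ltn_ord j'; rewrite mxE; case: (ltnP j' (m - k)) => // jmk jm.
  by rewrite low //; lia.
by rewrite size_poly_eq // (_ : (m.-1 - (m - k).-1)%N = k) //; lia.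
Qed.

Section RowSize.
Variables (K : finFieldType) (n m : nat).

(* [row_size a i] is the largest l with a^{(i)}_l <> 0 (0 for a zero row), so
   that I_l(a) is its fibre over l (lemma [IsetE]). *)
Definition row_size (a : 'M[K]_(n, m)) (i : 'I_n) : nat := size (rVpoly (row i a)).

Lemma row_size_le a i : (row_size a i <= m)%N.
Proof. exact: size_poly. Qed.

Lemma row_sizeB_cases a b c i :
  [\/ row_size (a - c) i = row_size (a - b) i, row_size (b - c) i = row_size (a - b) i
    | (row_size (a - b) i < row_size (a - c) i)%N /\ row_size (a - c) i = row_size (b - c) i].
Proof.
move: (size_polyB_cases (rVpoly (row i (a - c))) (rVpoly (row i (b - c)))).
by rewrite -!linearB /= opprB subrKA.
Qed.

Lemma IsetE a l : (0 < l)%N -> Iset a l = [set i | row_size a i == l].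
Proof.
case: l => // k _; apply/setP=> i; rewrite !inE /row_size.
set p := rVpoly (row i a).
have -> : ent a i k.+1 = p`_k.
  by rewrite coef_rVpoly /ent /=; case: insub => // j; rewrite mxE.
have -> : [forall j : 'I_m, (k.+1 <= j)%N ==> (a i j == 0)] = (size p <= k.+1)%N.
  apply/forallP/leq_sizeP => [aij0 j kj|pj0 j].
    rewrite coef_rVpoly; case: insubP => [j' _ jj'|//]; rewrite -jj' in kj.
    by rewrite mxE; exact/eqP/(implyP (aij0 j')).
  by apply/implyP=> kj; rewrite -(pj0 j kj) coef_rVpoly_ord mxE.
apply/andP/eqP=> [[pk pk0]|pk]; last first.
  split; first by rewrite pk.
  by rewrite -[k]/(k.+1.-1) -pk -lead_coefE lead_coef_eq0 -size_poly_eq0 pk.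
apply/eqP; rewrite eqn_leq pk /=; apply: contraR pk0; rewrite -leqNgt => size_p.
by rewrite nth_default.
Qed.

Lemma Mset_fiber_le X c a : a \in Mset X c ->
  forall l, (1 <= l <= m)%N -> (#|[set i | row_size (a - c) i == l]|)%:Z <= X l.
Proof.
by rewrite inE => /forallP aX [//|l] /= lm; rewrite -IsetE //; exact: (aX (Ordinal lm)).
Qed.

End RowSize.

Lemma card_set_sum (I : finType) (P : pred I) : #|[set i | P i]| = (\sum_i P i)%N.
Proof. by rewrite -sum1dep_card big_mkcond /=; apply: eq_bigr => i _; case: (P i). Qed.

Lemma sum_weighted_indicator (r : seq nat) (w : nat -> nat) k : uniq r ->
  (\sum_(l <- r) w l * (k == l) = if k \in r then w k else 0)%N.
Proof.
move=> r_uniq; case: ifP => [kr|/negbT kr].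
  rewrite (bigD1_seq k) //= eqxx muln1 big1 ?addn0 // => l.
  by rewrite eq_sym => /negbTE ->; rewrite muln0.
rewrite big1_seq // => l /andP[_ lr].
by case: eqP => [kl|]; [move: kr; rewrite kl lr | rewrite muln0].
Qed.

Lemma sum_card_fibers (I : finType) (g : I -> nat) (r : seq nat) (w : nat -> nat) :
  uniq r -> (\sum_(l <- r) w l * #|[set i | g i == l]| =
             \sum_i (if g i \in r then w (g i) else 0))%N.
Proof.
move=> r_uniq; under eq_bigr do rewrite card_set_sum big_distrr.
by rewrite exchange_big; apply: eq_bigr => i _; exact: sum_weighted_indicator.
Qed.

Lemma Posz_sum (I : Type) (r : seq I) (P : pred I) (E : I -> nat) :
  (\sum_(i <- r | P i) E i)%N%:Z = \sum_(i <- r | P i) (E i)%:Z.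
Proof. exact: (big_morph Posz PoszD). Qed.

Section Fibers.
Variables (n m : nat) (alpha beta lam : 'I_n -> nat).
Hypothesis alpha_le : forall i, (alpha i <= m)%N.
Hypothesis lam_cases : forall i,
  [\/ alpha i = lam i, beta i = lam i | (lam i < alpha i)%N /\ alpha i = beta i].

Lemma card_fiber_le l :
  (#|[set i | lam i == l]| <= #|[set i | alpha i == l]| + #|[set i | beta i == l]|
     + \sum_(l.+1 <= nu < m.+1) #|[set i | alpha i == nu]|)%N.
Proof.
under eq_bigr do rewrite -[#|_|]mul1n.
rewrite sum_card_fibers ?iota_uniq // !card_set_sum -!big_split leq_sum // => i _.
rewrite /= mem_index_iota; case: eqP => [<-|_] //.
case: (lam_cases i) => [->|->|[lt_lam _]]; first by rewrite eqxx.
  by rewrite eqxx addnAC leq_addl.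
by rewrite ltnS lt_lam alpha_le addn1.
Qed.

Lemma weighted_fiber_le :
  (\sum_(1 <= l < m.+1) l.+1 * #|[set i | lam i == l]| <=
   \sum_(1 <= l < m.+1) l.+1 * (#|[set i | alpha i == l]| + #|[set i | beta i == l]|))%N.
Proof.
under [X in (_ <= X)%N]eq_bigr do rewrite mulnDr.
rewrite [X in (_ <= X)%N]big_split /= !sum_card_fibers ?iota_uniq //.
rewrite -big_split leq_sum // => i _ /=.
rewrite !mem_index_iota; case: ifP => [lam_in|_ //].
case: (lam_cases i) => [->|->|[lt_lam _]]; rewrite ?lam_in ?leq_addr ?leq_addl //.
have -> : (0 < alpha i < m.+1)%N by rewrite ltnS alpha_le (leq_ltn_trans _ lt_lam).
by rewrite ltn_addr // ltnS ltnW.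
Qed.

Variable X : nat -> int.
Hypothesis alphaX : forall l, (1 <= l <= m)%N -> (#|[set i | alpha i == l]|)%:Z <= X l.
Hypothesis betaX : forall l, (1 <= l <= m)%N -> (#|[set i | beta i == l]|)%:Z <= X l.

Lemma card_fiber_le_X l : (1 <= l <= m)%N ->
  (#|[set i | lam i == l]|)%:Z <= 2%:Z * X l + \sum_(l.+1 <= nu < m.+1) X nu.
Proof.
move=> lm; have := card_fiber_le l.
have := alphaX lm; have := betaX lm.
have : (\sum_(l.+1 <= nu < m.+1) #|[set i | alpha i == nu]|)%N%:Z
         <= \sum_(l.+1 <= nu < m.+1) X nu.
  rewrite Posz_sum; apply: ler_sum_nat => nu /andP[lnu num]; apply: alphaX.
  by rewrite ltnS in num; rewrite num (leq_trans _ lnu).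
lia.
Qed.

Lemma weighted_fiber_le_X :
  (\sum_(1 <= l < m.+1) l.+1 * #|[set i | lam i == l]|)%N%:Z
    <= 2%:Z * \sum_(1 <= l < m.+1) (l.+1)%:Z * X l.
Proof.
apply: le_trans (_ : _ <= (\sum_(1 <= l < m.+1) l.+1 * (#|[set i | alpha i == l]|
                                   + #|[set i | beta i == l]|))%N%:Z) _.
  by rewrite lez_nat weighted_fiber_le.
rewrite Posz_sum mulr_sumr; apply: ler_sum_nat => l lm.
rewrite ltnS in lm; rewrite PoszM mulrCA ler_wpM2l //.
by have := alphaX lm; have := betaX lm; lia.
Qed.

End Fibers.

Section DivisorCounts.
Variables (K : finFieldType) (F : fieldType) (iota : {rmorphism K -> F}).
Variables (n m : nat) (Ps : 'I_n -> place iota) (D : place iota -> int).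
Variable lam : 'I_n -> nat.
Hypothesis D_ge0 : forall i, 0 <= D (Ps i).
Hypothesis lam_of_D : forall i l, (1 <= l <= m)%N -> D (Ps i) = m%:Z - l%:Z -> lam i = l.

Lemma jl_le_fiber l : (1 <= l <= m)%N -> (jl m Ps D l <= #|[set i | lam i == l]|)%N.
Proof.
move=> lm; apply/subset_leq_card/subsetP => i.
by rewrite !inE => /eqP/(lam_of_D lm) ->.
Qed.

Lemma Jm_le_fibers : (Jm m Ps D <= \sum_(1 <= l < m.+1) l.+1 * #|[set i | lam i == l]|)%N.
Proof.
rewrite /Jm big_nat_cond [X in (_ <= X)%N]big_nat_cond.
by apply: leq_sum => l /andP[lm _]; rewrite leq_mul2l jl_le_fiber ?orbT.
Qed.

Lemma degbar_card_fibers_ge :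
  ((m + 1) * n)%N%:Z <= degbar m Ps D + (#|[set i | D (Ps i) == m%:Z]|)%:Z
                        + (\sum_(1 <= l < m.+1) l.+1 * #|[set i | lam i == l]|)%N%:Z.
Proof.
rewrite sum_card_fibers ?iota_uniq // card_set_sum !Posz_sum /degbar -!big_split /=.
rewrite mulnC -[n in (n * _)%N]card_ord -sum_nat_const Posz_sum; apply: ler_sum => i _.
move: (D_ge0 i) (@lam_of_D i); case: (D (Ps i)) => // e _ lamD.
rewrite mem_index_iota minElt ltz_nat eqz_nat.
have [me|em|<-] := ltngtP m e.
- by case: ifP => _ /=; lia.
- have -> : lam i = (m - e)%N by apply: lamD; lia.
  by rewrite ifF ?ifT /=; lia.
- by rewrite ltnNge leqnSn /=; lia.
Qed.

End DivisorCounts.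

Section MinimumDistance.
Variables (K : finFieldType) (F : fieldType) (iota : {rmorphism K -> F}).
Variables (n m : nat) (Ps : 'I_n -> place iota) (t : 'I_n -> F).
Variables (G : divisor iota) (coef : 'I_n -> F -> nat -> K).
Variables (X : nat -> int) (s : nat) (c : 'M[K]_(n, m)).
Hypothesis Ht : forall i, vP (Ps i) (t i) = 1.
Hypothesis HGsupp : forall i, G (Ps i) = 0.
Hypothesis Hcoef : forall i f, LL G f -> is_local_expansion (Ps i) (t i) f (coef i f).
Hypothesis HG : forall f, LL G f -> f != 0 ->
  jcond m Ps X (zero_div f) -> degbar m Ps (zero_div f) <= s%:Z - 1.

Lemma LL_vP_ge0 h i : LL G h -> 0 <= vP (Ps i) h.
Proof. by case=> [->|/(_ (Ps i))]; rewrite ?vP0 ?HGsupp ?oppr0. Qed.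

Lemma local_expansion_diff f g i : LL G f -> LL G g ->
  is_local_expansion (Ps i) (t i) (f - g) (fun l => coef i f l - coef i g l).
Proof. by move=> Lf Lg; apply: local_expansionB (Hcoef i Lf) (Hcoef i Lg). Qed.

Lemma row_size_PhiB f g i l : LL G f -> LL G g -> f != g -> (1 <= l <= m)%N ->
  vP (Ps i) (f - g) = m%:Z - l%:Z -> row_size (Phi m coef f - Phi m coef g) i = l.
Proof.
rewrite -subr_eq0 => Lf Lg fg lm; rewrite (_ : _ - _ = (m - l)%N%:Z); last by lia.
case/(local_expansion_lead (Ht i) (local_expansion_diff i Lf Lg) fg) => low fg_l.
pose a k := coef i f k - coef i g k.
rewrite /row_size (_ : row i _ = \row_(j < m) a (m.-1 - j)%N).
  by rewrite (size_rVpoly_rev (k := (m - l)%N)) //; lia.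
by apply/rowP=> j; rewrite !mxE.
Qed.

Lemma psi_neq f g i : LL G f -> LL G g -> f != g ->
  vP (Ps i) (f - g) = m%:Z -> psi m coef f 0 i != psi m coef g 0 i.
Proof.
rewrite -subr_eq0 => Lf Lg fg vm.
have [_] := local_expansion_lead (Ht i) (local_expansion_diff i Lf Lg) fg vm.
by rewrite !mxE subr_eq0.
Qed.

Lemma hamming_psi_ge f g :
  LL G f -> LL G g -> Phi m coef f \in Mset X c -> Phi m coef g \in Mset X c -> f != g ->
  ((m + 1) * n + 1)%N%:Z - s%:Z - 2%:Z * \sum_(1 <= l < m.+1) (l.+1)%:Z * X l
    <= (hamming (psi m coef f) (psi m coef g))%:Z.
Proof.
move=> Lf Lg Mf Mg fg; have Lh := LLB Lf Lg; have h0 : f - g != 0 by rewrite subr_eq0.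
pose D := @zero_div K F iota (f - g).
have DE i : D (Ps i) = vP (Ps i) (f - g) by apply/max_idPr; apply: LL_vP_ge0.
have D_ge0 i : 0 <= D (Ps i) by rewrite DE LL_vP_ge0.
pose alpha := row_size (Phi m coef f - c); pose beta := row_size (Phi m coef g - c).
pose lam := row_size (Phi m coef f - Phi m coef g).
have alpha_le i : (alpha i <= m)%N := row_size_le _ i.
have lam_cases i :
    [\/ alpha i = lam i, beta i = lam i | (lam i < alpha i)%N /\ alpha i = beta i].
  exact: row_sizeB_cases.
have lam_of_D i l : (1 <= l <= m)%N -> D (Ps i) = m%:Z - l%:Z -> lam i = l.
  by rewrite DE; apply: row_size_PhiB.
have alphaX := Mset_fiber_le Mf; have betaX := Mset_fiber_le Mg.
have W_le := weighted_fiber_le_X alpha_le lam_cases alphaX betaX.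
have HJ : jcond m Ps X D.
  split=> [l lm|]; last by apply: le_trans W_le; rewrite lez_nat Jm_le_fibers.
  apply: le_trans (card_fiber_le_X alpha_le lam_cases alphaX betaX lm).
  by rewrite lez_nat jl_le_fiber.
have D_hamming : (#|[set i | D (Ps i) == m%:Z]| <= hamming (psi m coef f) (psi m coef g))%N.
  by apply/subset_leq_card/subsetP => i; rewrite !inE DE => /eqP /(psi_neq Lf Lg fg).
have := HG Lh h0 HJ; have := degbar_card_fibers_ge D_ge0 lam_of_D.
by move: D_hamming W_le; rewrite -lez_nat /D; lia.
Qed.

End MinimumDistance.

Lemma hammingxx (K : finFieldType) (n : nat) (u : 'rV[K]_n) : hamming u u = 0%N.
Proof. by apply/eqP; rewrite cards_eq0; apply/eqP/setP => i; rewrite !inE eqxx. Qed.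

(* Trivial when [A] is infinite: [fincard A] is then 0. *)
Lemma fincard_le_card_image (T : eqType) (U : finType) (A : T -> Prop) (p : T -> U) :
  (forall x y, A x -> A y -> p x = p y -> x = y) ->
  (fincard A <= #|[set u | `[< exists x, A x /\ p x = u >]]|)%N.
Proof.
move=> p_inj; rewrite /fincard /the_nat; case: pselect => [ex|_] //.
have [s [s_uniq sA <-]] := proj2_sig (cid ex).
rewrite -(size_map p) cardE; apply: uniq_leq_size.
  by rewrite map_inj_in_uniq // => x y /sA Ax /sA Ay; exact: p_inj.
by move=> _ /mapP[x /sA Ax ->]; rewrite mem_enum inE; apply/asboolP; exists x.
Qed.

Theorem theorem2p9
  (K : finFieldType) (F : fieldType) (iota : {rmorphism K -> F})
  (HFF : function_field iota) (Hconst : full_constant_field iota)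
  (n m : nat) (Hn : (1 <= n)%N) (Hm : (1 <= m)%N)
  (Ps : 'I_n -> place iota) (HPinj : injective Ps)
  (HPrat : forall i, place_deg (Ps i) = 1%N)
  (h : nat) (Hh : class_number iota h)
  (t : 'I_n -> F) (Ht : forall i, vP (Ps i) (t i) = 1)
  (r s : nat) (Hsr : (s <= r)%N)
  (R : realType) (x : nat -> R)
  (Hx0 : forall l, (1 <= l <= m)%N -> 0 <= x l)
  (Hx1 : \sum_(1 <= l < m.+1) x l <= 1)
  (HV : (fincard (Vm m Ps r s (Xfloor n x)) < h)%N)
  (G : divisor iota) (HGdeg : deg G = r%:Z) (HGsupp : forall i, G (Ps i) = 0)
  (HG : forall f : F, LL G f -> f != 0 ->
          jcond m Ps (Xfloor n x) (zero_div f) ->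
          degbar m Ps (zero_div f) <= s%:Z - 1)
  (coef : 'I_n -> F -> nat -> K)
  (Hcoef : forall i f, LL G f -> is_local_expansion (Ps i) (t i) f (coef i f))
  (HLM : (#|K| ^ (m * n) < fincard (LL G) * #|Mset (Xfloor n x) (0 : 'M[K]_(n, m))|)%N)
  (Hlen : s%:Z + 2%:Z * \sum_(1 <= l < m.+1) (l.+1)%:Z * Xfloor n x l
            <= ((m + 1) * n)%N%:Z)
  (c : 'M[K]_(n, m))
  (HNc : ((fincard (LL G) * #|Mset (Xfloor n x) (0 : 'M[K]_(n, m))|)%N%:R / (#|K| ^ (m * n))%N%:R : R)
         <= (fincard (fun f => LL G f /\ Phi m coef f \in Mset (Xfloor n x) c))%:R) :
  let C : {set 'rV[K]_n} :=
    [set u : 'rV[K]_n | `[< exists f, (LL G f /\ Phi m coef f \in Mset (Xfloor n x) c)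
                           /\ psi m coef f = u >]] in
  Num.ceil ((fincard (LL G) * #|Mset (Xfloor n x) (0 : 'M[K]_(n, m))|)%N%:R / (#|K| ^ (m * n))%N%:R : R)
    <= (#|C|)%:Z
  /\ min_dist_ge C (((m + 1) * n + 1)%N%:Z - s%:Z
                    - 2%:Z * \sum_(1 <= l < m.+1) (l.+1)%:Z * Xfloor n x l).
Proof.
move=> C; have dist := hamming_psi_ge Ht HGsupp Hcoef HG (c := c).
have psi_inj f g : LL G f /\ Phi m coef f \in Mset (Xfloor n x) c ->
    LL G g /\ Phi m coef g \in Mset (Xfloor n x) c -> psi m coef f = psi m coef g -> f = g.
  move=> [Lf Mf] [Lg Mg] psi_fg; apply/eqP/negPn/negP => fg.
  by have := dist _ _ Lf Lg Mf Mg fg; rewrite psi_fg hammingxx; lia.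
split.
  rewrite ceil_le_int; apply: le_trans HNc _; rewrite -pmulrn ler_nat.
  exact: fincard_le_card_image psi_inj.
move=> u v /[!inE] /asboolP[f [[Lf Mf] <-]] /asboolP[g [[Lg Mg] <-]] psi_fg.
by apply: dist => //; apply: contraNneq psi_fg => ->.
Qed.
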